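(* Let $\mathcal{D}$ be a distribution supported on $[0,1]$ with largest median $\nu=\sup\{y:\Pr_{x\sim\mathcal{D}}(x\le y)\le\frac12\}$. Then for all $n,m$ and every preference profile $\sigma$ on $n$ voters and $m$ alternatives, the alternative $f(\sigma)$ selected by binomial voting satisfies $\mathbb{E}[\mathrm{sw}(f(\sigma),u)]\ge\frac{\nu}{2}\max_{j\in A}\mathbb{E}[\mathrm{sw}(j,u)]$; i.e., binomial voting is a $\frac{\nu}{2}$-expected-welfare-maximizing rule for $\mathcal{D}$.
   Context: There are $n$ voters and $m$ alternatives $A=\{1,\dots,m\}$. A preference profile $\sigma$ consists of a ranking of $A$ for each voter; position $1$ is the top. Given $\mathcal{D}$ and $\sigma$, a random utility profile $u$ consistent with $\sigma$ is generated as follows: independently for each voter $i$, draw $m$ i.i.d. samples from $\mathcal{D}$ and assign them, from highest to lowest, to the alternatives in the order of voter $i$'s ranking. The social welfare of $j$ is $\mathrm{sw}(j,u)=\sum_i u_{ij}$; expectations are over $u$. Binomial voting is the scoring rule in which each voter gives $\sum_{\ell=k}^m\binom{m}{\ell}$ points to the alternative she ranks in position $k$; it selects an alternative with the largest total score (ties broken arbitrarily). *)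

From HB Require Import structures.
From mathcomp Require Import all_boot all_order all_algebra all_fingroup.
From mathcomp Require Import all_classical all_reals all_analysis.
Set Implicit Arguments. Unset Strict Implicit. Unset Printing Implicit Defensive.
Import Order.TTheory GRing.Theory Num.Theory.
Local Open Scope classical_set_scope.
Local Open Scope ring_scope.

(* Positions are 0-indexed: position p (0 <= p < m) is the paper's position p+1.
   A ranking of voter i is a permutation  sigma i : {perm 'I_m}  mapping a
   position p to the alternative ranked at position p (sigma i ord0 is the top). *)
Definition profile (n m : nat) := 'I_n -> {perm 'I_m}.

Definition pos n m (sigma : profile n m) (i : 'I_n) (j : 'I_m) : 'I_m :=
  ((sigma i)^-1)%g j.

Definition binom_points (m p : nat) : nat := \sum_(p.+1 <= l < m.+1) 'C(m, l).

Definition binom_score n m (sigma : profile n m) (j : 'I_m) : nat :=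
  \sum_(i < n) binom_points m (pos sigma i j).

(* f(sigma) = j is a possible output of binomial voting (ties arbitrary). *)
Definition binomial_winner n m (sigma : profile n m) (j : 'I_m) : Prop :=
  forall j' : 'I_m, (binom_score sigma j' <= binom_score sigma j)%N.

(* Random utility profile: voter i has m samples X i 0, ..., X i (m-1);
   the k-th largest of them (k 0-indexed) is assigned to alternative sigma i k. *)
Definition utility {R : realType} {T : Type} n m (sigma : profile n m)
  (X : 'I_n -> 'I_m -> T -> R) (i : 'I_n) (j : 'I_m) (w : T) : R :=
  nth 0 (sort (fun a b : R => b <= a) [seq X i l w | l <- enum 'I_m])
      (pos sigma i j).

Definition sw {R : realType} {T : Type} n m (sigma : profile n m)
  (X : 'I_n -> 'I_m -> T -> R) (j : 'I_m) (w : T) : R :=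
  \sum_(i < n) utility sigma X i j w.

Definition largest_median {R : realType} (D : probability R R) : R :=
  sup [set y : R | (D [set x : R | (x <= y)%R] <= (2^-1)%:E)%E].

(* The n*m samples are mutually independent (product rule on every family of
   Borel sets, which covers all finite subfamilies by taking setT elsewhere). *)
Definition iid_samples {R : realType} {d : measure_display} {Om : measurableType d}
  (P : probability Om R) (D : probability R R) n m (X : 'I_n -> 'I_m -> Om -> R) : Prop :=
  (forall i l, measurable_fun setT (X i l)) /\
  (forall i l (B : set R), measurable B -> P (X i l @^-1` B) = D B) /\
  (forall B : 'I_n -> 'I_m -> set R, (forall i l, measurable (B i l)) ->
     P (\bigcap_(i in setT) \bigcap_(l in setT) (X i l @^-1` B i l)) =
     (\prod_(i < n) \prod_(l < m) P (X i l @^-1` B i l))%E).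

From HB Require Import structures.
From mathcomp Require Import all_boot all_order all_algebra all_fingroup.
From mathcomp Require Import all_classical all_reals all_analysis.
From mathcomp Require Import lra zify measurable_realfun.
Import Order.TTheory GRing.Theory Num.Theory.
Set Implicit Arguments. Unset Strict Implicit. Unset Printing Implicit Defensive.

(* Fix t below the largest median, so that each sample exceeds t with
   probability p >= 1/2.  The alternative that a voter ranks at position k
   has utility above t iff more than k of her m samples exceed t; this has
   probability P[Bin(m, p) > k] >= P[Bin(m, 1/2) > k], which is exactly the
   number of binomial points of position k divided by 2^m.  As utilities are
   a.s. in [0, 1], E[sw j] >= t * score(j) / 2^m and E[sw j] <= n.  A binomial
   winner has at least the average score n 2^(m-1), so its expected welfare
   is at least t n / 2 for every such t, hence at least (nu / 2) n. *)

Lemma card_set_ord_le m (S : {set 'I_m}) : #|S| <= m.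
Proof. by rewrite -[m in _ <= m]card_ord max_card. Qed.

Lemma binom_points_card m k :
  binom_points m k = #|[set S : {set 'I_m} | k < #|S|]|.
Proof.
have inord_card (S : {set 'I_m}) : @inord m #|S| = #|S| :> nat.
  by rewrite inordK // ltnS card_set_ord_le.
rewrite /binom_points big_geq_mkord -sum1dep_card.
rewrite (partition_big (fun S : {set 'I_m} => inord #|S|) (fun l : 'I_m.+1 => k < l))
  /=; last first.
  by move=> S; rewrite inord_card.
apply: eq_bigr => l kl; rewrite -[m in 'C(m, _)]card_ord -card_draws -sum1_card.
apply: eq_bigl => S; rewrite inE -val_eqE /= inord_card.
by case: eqP => [->|_]; rewrite ?kl ?andbF.
Qed.

Lemma sum_binom_points m :
  \sum_(p < m) binom_points m p = \sum_(S : {set 'I_m}) #|S|.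
Proof.
under eq_bigr do rewrite binom_points_card -sum1dep_card.
rewrite (exchange_big_dep predT) //=; apply: eq_bigr => S _.
by rewrite (big_ord_narrow (card_set_ord_le S)) sum1_card card_ord.
Qed.

Lemma card_set_type (T : finType) : #|{set T}| = 2 ^ #|T|.
Proof. by rewrite -[LHS]cardsT -powersetT card_powerset cardsT. Qed.

Lemma sum_card_subsets m : 2 * \sum_(S : {set 'I_m}) #|S| = m * 2 ^ m.
Proof.
have compl : \sum_(S : {set 'I_m}) #|S| = \sum_(S : {set 'I_m}) #|~: S|.
  exact: (reindex_inj (@finset.setC_inj _)).
rewrite mul2n -addnn {2}compl -big_split /=.
under eq_bigr do rewrite cardsC card_ord.
by rewrite sum_nat_const card_set_type card_ord mulnC.
Qed.

Lemma sum_binom_score n m (sigma : profile n m) :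
  \sum_(j < m) binom_score sigma j = n * \sum_(p < m) binom_points m p.
Proof.
rewrite exchange_big /= -[n in RHS]card_ord -sum_nat_const; apply: eq_bigr => i _.
rewrite (reindex_inj (@perm_inj _ (sigma i))).
by apply: eq_bigr => p _; rewrite /pos permK.
Qed.

Lemma binomial_winner_score n m (sigma : profile n m) (jstar : 'I_m) :
  binomial_winner sigma jstar -> n * 2 ^ m <= 2 * binom_score sigma jstar.
Proof.
move=> win; have m_gt0 : 0 < m by case: m {sigma win} jstar => [[]|].
rewrite -(leq_pmul2l m_gt0) mulnCA -sum_card_subsets -sum_binom_points.
rewrite mulnCA -(sum_binom_score sigma) mulnCA leq_mul2l /=.
by rewrite -[m in m * _]card_ord -sum_nat_const; apply: leq_sum.
Qed.

Local Open Scope ring_scope.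

Lemma upper_sum_ge0 (R : realDomainType) (T : finType) (g : T -> nat) (v : T -> R) k :
  (forall x y, (g x <= g y)%N -> v x <= v y) -> \sum_x v x = 0 ->
  0 <= \sum_(x | (k < g x)%N) v x.
Proof.
move=> v_mono v_sum0.
have [/existsP[x0 /andP[kx0 vx0]] | /existsPn v_ge0] :=
  boolP [exists x, (k < g x)%N && (v x < 0)].
- (* a negative value above the threshold makes all values below it negative *)
  have -> : \sum_(x | (k < g x)%N) v x = - \sum_(x | ~~ (k < g x)%N) v x.
    apply/eqP; rewrite -addr_eq0; apply/eqP.
    by rewrite -[RHS]v_sum0 [in RHS](bigID (fun x => (k < g x)%N)).
  rewrite oppr_ge0; apply: sumr_le0 => x; rewrite -leqNgt => xk.
  exact/ltW/(le_lt_trans _ vx0)/v_mono/(leq_trans xk)/ltnW.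
- by apply: sumr_ge0 => x kx; have := v_ge0 x; rewrite kx /= -leNgt.
Qed.

Definition bernoulli_weight (R : ringType) (T : finType) (p : R) (S : {set T}) : R :=
  \prod_(l : T) (if l \in S then p else 1 - p).

Section BernoulliWeight.
Variables (R : realFieldType) (T : finType).
Implicit Types (p : R) (S : {set T}).

Lemma sum_bernoulli_weight p : \sum_(S : {set T}) bernoulli_weight p S = 1.
Proof.
by rewrite /bernoulli_weight -bigA_distr big1 // => l _ /=; rewrite addrC subrK.
Qed.

Lemma bernoulli_weightE p S :
  bernoulli_weight p S = p ^+ #|S| * (1 - p) ^+ #|~: S|.
Proof.
rewrite /bernoulli_weight (bigID (mem S)) /=.
rewrite (eq_bigr (fun=> p)) => [|l ->//].
rewrite [X in _ * X](eq_bigr (fun=> 1 - p)) => [|l /negPf->//].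
by rewrite !prodr_const; congr (_ * _ ^+ _); apply: eq_card => l; rewrite inE.
Qed.

Lemma bernoulli_weight_mono p S S' : 2^-1 <= p <= 1 -> (#|S| <= #|S'|)%N ->
  bernoulli_weight p S <= bernoulli_weight p S'.
Proof.
move=> /andP[p_ge p_le1] SS'; rewrite !bernoulli_weightE.
have [d dE] : exists d, #|S'| = (#|S| + d)%N by exists (#|S'| - #|S|)%N; rewrite subnKC.
have dC : #|~: S| = (#|~: S'| + d)%N by have := cardsC S; have := cardsC S'; lia.
rewrite dE dC !exprD -mulrA [_ * (1 - p) ^+ d]mulrC.
apply: ler_wpM2l; first by apply: exprn_ge0; lra.
apply: ler_wpM2r; first by apply: exprn_ge0; lra.
by apply: lerXn2r; rewrite ?nnegrE; lra.
Qed.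

End BernoulliWeight.

Lemma binom_points_le_bernoulli_tail (R : realFieldType) m k (p : R) : 2^-1 <= p <= 1 ->
  (binom_points m k)%:R <=
    (2 ^ m)%:R * \sum_(S : {set 'I_m} | (k < #|S|)%N) bernoulli_weight p S.
Proof.
move=> hp; rewrite -subr_ge0 mulr_sumr binom_points_card -sum1dep_card natr_sum -sumrB.
apply: upper_sum_ge0 => [S S' SS'|].
  by rewrite lerD2r ler_wpM2l ?ler0n // bernoulli_weight_mono.
rewrite sumrB -mulr_sumr sum_bernoulli_weight mulr1 sumr_const card_set_type card_ord.
by rewrite subrr.
Qed.

Lemma sorted_ge_nth_gt (R : realDomainType) (t : R) (s : seq R) k :
  sorted (fun a b : R => b <= a) s -> (k < size s)%N ->
  (t < nth 0 s k) = (k < count (fun x => (t < x)%R) s)%N.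
Proof.
elim: s k => [//|x s IH] k /= s_sorted; have s_sorted' := path_sorted s_sorted.
have tail_le_x : all (fun y => y <= x) s.
  by apply: order_path_min s_sorted => y z u zy uz; apply: le_trans uz zy.
case: (ltrP t x) => tx.
  by case: k => [|k] //=; rewrite ltnS add1n ltnS; apply: IH.
have count0 : count (fun y => (t < y)%R) s = 0%N.
  apply/eqP; rewrite -leqn0 leqNgt -has_count; apply/hasPn => y ys.
  by rewrite -leNgt (le_trans (allP tail_le_x y ys)).
case: k => [|k] /=; first by rewrite count0 ltNge tx.
by rewrite ltnS => ks; rewrite IH // count0.
Qed.

Definition samples_above (R : realType) T n m (X : 'I_n -> 'I_m -> T -> R)
    (i : 'I_n) (t : R) (w : T) : {set 'I_m} :=
  [set l | t < X i l w].

Lemma utility_gt (R : realType) T n m (sigma : profile n m)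
    (X : 'I_n -> 'I_m -> T -> R) i j w t :
  (t < utility sigma X i j w) = (pos sigma i j < #|samples_above X i t w|)%N.
Proof.
have ge_total : total (fun a b : R => b <= a) by move=> a b; rewrite orbC le_total.
rewrite /utility sorted_ge_nth_gt ?sort_sorted //; last first.
  by rewrite size_sort size_map size_enum_ord.
by rewrite count_sort count_map -size_filter enumT /samples_above cardsE cardE /enum_mem.
Qed.

Lemma utility_sample (R : realType) T n m (sigma : profile n m)
    (X : 'I_n -> 'I_m -> T -> R) i j w :
  exists l, utility sigma X i j w = X i l w.
Proof.
have /mapP[l _ ->] : utility sigma X i j w \in [seq X i l w | l <- enum 'I_m].
  rewrite -(mem_sort (fun a b : R => b <= a)) mem_nth //.
  by rewrite size_sort size_map size_enum_ord.
by exists l.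
Qed.

Local Open Scope classical_set_scope.

Section FullMeasure.
Local Open Scope ereal_scope.
Context d (T : measurableType d) (R : realType) (P : probability T R).
Variable G : set T.
Hypotheses (mG : measurable G) (PG : P G = 1).

Let PnotG : P (~` G) = 0.
Proof. by rewrite probability_setC // PG subee. Qed.

Lemma integral_full_measure (f : T -> \bar R) : measurable_fun setT f ->
  \int[P]_x f x = \int[P]_(x in G) f x.
Proof.
move=> mf; rewrite [RHS]integral_mkcond; apply: ae_eq_integral => //.
- exact/(measurable_restrictT f mG)/measurable_funTS.
- exists (~` G); split; [exact: measurableC | exact: PnotG |].
  by move=> x /= + Gx; apply; rewrite patchT // inE.
Qed.

Lemma le_integral_full (f g : T -> R) :
  measurable_fun setT f -> measurable_fun setT g ->
  (forall x, G x -> (0 <= f x <= g x)%R) -> \int[P]_x (f x)%:E <= \int[P]_x (g x)%:E.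
Proof.
move=> mf mg fg; rewrite !integral_full_measure; try exact/measurable_EFinP.
apply: ge0_le_integral => //; try exact/measurable_EFinP/measurable_funTS.
- by move=> x /fg /andP[f0 _]; rewrite lee_fin.
- by move=> x /fg /andP[_ fg']; rewrite lee_fin.
Qed.

Lemma integral_le_full (f : T -> R) (c : R) : measurable_fun setT f ->
  (forall x, G x -> (0 <= f x <= c)%R) -> \int[P]_x (f x)%:E <= c%:E.
Proof.
move=> mf f_bnd; apply: le_trans (le_integral_full mf (measurable_cst c) f_bnd) _.
rewrite (integral_cst P measurableT c%:E) (_ : _ setT = 1) ?mule1 //.
exact: probability_setT.
Qed.

End FullMeasure.

Lemma integral_scaled_sum_indic d (T : measurableType d) (R : realType)
    (mu : {measure set T -> \bar R}) (I : Type) (s : seq I) (A : I -> set T) (c : R) :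
  (0 <= c)%R -> (forall i, measurable (A i)) ->
  (\int[mu]_x (c * \sum_(i <- s) \1_(A i) x)%:E = c%:E * \sum_(i <- s) mu (A i))%E.
Proof.
move=> c_ge0 mA; under eq_integral do rewrite mulr_sumr -sumEFin.
rewrite ge0_integral_sum //; first last.
- by move=> i x _; rewrite lee_fin mulr_ge0 // indicE ler0n.
- by move=> i; apply/measurable_EFinP/measurable_funM => //; exact: measurable_indic.
rewrite ge0_sume_distrr //; apply: eq_bigr => i _.
under eq_integral do rewrite EFinM.
rewrite ge0_integralZl_EFin // ?integral_indic ?setIT //.
exact/measurable_EFinP/measurable_indic.
Qed.

Section LargestMedian.
Local Open Scope ereal_scope.
Variables (R : realType) (D : probability R R).
Hypothesis D_supp : D [set x : R | (0 <= x <= 1)%R] = 1.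

Let cdf_le_half := [set y : R | D [set x : R | (x <= y)%R] <= (2^-1)%:E].

Let measurable_unit : measurable [set x : R | (0 <= x <= 1)%R].
Proof. by rewrite -set_itvcc; exact: measurable_itv. Qed.

Let measurable_le (y : R) : measurable [set x : R | (x <= y)%R].
Proof. by rewrite -set_itvNyc; exact: measurable_itv. Qed.

Let cdf_le_half_neg y : (y < 0)%R -> cdf_le_half y.
Proof.
move=> y_lt0; apply: (@le_trans _ _ (D (~` [set x : R | (0 <= x <= 1)%R]))).
  apply: le_measure; rewrite ?inE; [exact: measurable_le | exact: measurableC |].
  by move=> x /= xy /andP[x0 _]; lra.
by rewrite probability_setC // D_supp subee.
Qed.

Let cdf_le_half_lt1 y : cdf_le_half y -> (y < 1)%R.
Proof.
rewrite /cdf_le_half /= ltNge => Dy; apply/negP => y_ge1.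
have : 1 <= D [set x : R | (x <= y)%R].
  rewrite -D_supp; apply: le_measure; rewrite ?inE //.
  by move=> x /= /andP[_ x1]; lra.
by move=> /le_trans/(_ Dy); rewrite lee_fin; lra.
Qed.

Let has_sup_cdf_le_half : has_sup cdf_le_half.
Proof.
split; first by exists (-1)%R; apply: cdf_le_half_neg; lra.
by exists 1%R => y /cdf_le_half_lt1/ltW.
Qed.

Lemma largest_median_ge0 : (0 <= largest_median D)%R.
Proof.
rewrite leNgt; apply/negP => nu_lt0.
have : cdf_le_half (largest_median D / 2)%R by apply: cdf_le_half_neg; lra.
by move=> /(sup_upper_bound has_sup_cdf_le_half); rewrite -/(largest_median D); lra.
Qed.

Lemma lt_largest_median_tail t :
  (t < largest_median D)%R -> (2^-1)%:E <= D `]t, +oo[%classic.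
Proof.
move=> t_lt_nu.
have [y Dy ty] : exists2 y, cdf_le_half y & (t < y)%R.
  have eps_gt0 : (0 < largest_median D - t)%R by rewrite subr_gt0.
  have [y Dy y_gt] := sup_adherent eps_gt0 has_sup_cdf_le_half.
  by exists y => //; move: y_gt; rewrite -/(largest_median D); lra.
have Dt : D [set x : R | (x <= t)%R] <= (2^-1)%:E.
  apply: le_trans Dy; apply: le_measure; rewrite ?inE //.
  by move=> x /= xt; lra.
rewrite set_itvoy (_ : [set z | (t < z)%O] = ~` [set x : R | (x <= t)%R]); last first.
  by apply/seteqP; split => x /=; rewrite ltNge => /negP.
rewrite probability_setC //.
move: Dt; case: (D [set x | (x <= t)%R]) (measure_ge0 D [set x | (x <= t)%R]) => //= r r0.
by rewrite !lee_fin; lra.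
Qed.

End LargestMedian.

Definition above_cell (R : realType) n m (i : 'I_n) (t : R) (S : {set 'I_m})
    (i' : 'I_n) (l : 'I_m) : set R :=
  if i' == i then (if l \in S then `]t, +oo[%classic else ~` `]t, +oo[%classic)
  else setT.

Lemma samples_above_eqE (R : realType) T n m (X : 'I_n -> 'I_m -> T -> R) i t S :
  [set w | samples_above X i t w = S] =
  \bigcap_(i' in setT) \bigcap_(l in setT) (X i' l @^-1` above_cell i t S i' l).
Proof.
apply/seteqP; split => w /=.
  move=> <- i' _ l _; rewrite /above_cell; case: eqP => [->|//].
  by rewrite inE set_itvoy; case: ltP => //= tx; apply/negP; rewrite -leNgt.
move=> cells; apply/setP => l; rewrite inE.
have := cells i I l I; rewrite /above_cell eqxx set_itvoy.
by case: (l \in S) => /= [->|/negP/negbTE].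
Qed.

Section IidSamples.
Local Open Scope ereal_scope.
Variables (R : realType) (D : probability R R) (d : measure_display)
  (Om : measurableType d) (P : probability Om R) (n m : nat)
  (X : 'I_n -> 'I_m -> Om -> R) (sigma : profile n m).
Hypothesis HX : iid_samples P D X.

Let mX : forall i l, measurable_fun setT (X i l) := HX.1.

Let tail_fin t : D `]t, +oo[%classic \is a fin_num :=
  fin_num_measure D _ (measurable_itv _).

Let measurable_above_cell i t S i' l : measurable (@above_cell R n m i t S i' l).
Proof.
rewrite /above_cell; case: (_ == _) => //; case: (_ \in _); first exact: measurable_itv.
by apply: measurableC; exact: measurable_itv.
Qed.

Lemma measurable_samples_above_eq i t S :
  measurable [set w | samples_above X i t w = S].
Proof.
rewrite samples_above_eqE.
apply: fin_bigcap_measurable; first exact: finite_finset; move=> i' _.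
apply: fin_bigcap_measurable; first exact: finite_finset; move=> l _.
by rewrite -[X in measurable X]setTI; apply: mX.
Qed.

Lemma prob_samples_above_eq i t S :
  P [set w | samples_above X i t w = S] =
    (bernoulli_weight (fine (D `]t, +oo[%classic)) S)%:E.
Proof.
have [_ [lawX indepX]] := HX.
rewrite samples_above_eqE indepX // (bigD1 i) //= [X in _ * X]big1 ?mule1; last first.
  move=> i' /negPf i'i; apply: big1 => l _.
  by rewrite /above_cell i'i preimage_setT probability_setT.
rewrite /bernoulli_weight -prodEFin; apply: eq_bigr => l _.
rewrite lawX // /above_cell eqxx; case: (l \in S).
  by rewrite fineK.
by rewrite probability_setC ?EFinB ?fineK //; exact: measurable_itv.
Qed.

Let card_samples_above_gtE i t k :
  [set w | (k < #|samples_above X i t w|)%N] =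
  \bigcup_(S in [set S : {set 'I_m} | (k < #|S|)%N]) [set w | samples_above X i t w = S].
Proof.
apply/seteqP; split => [w kw | w [S /= kS ->]] //.
by exists (samples_above X i t w).
Qed.

Lemma measurable_card_samples_above_gt i t k :
  measurable [set w | (k < #|samples_above X i t w|)%N].
Proof.
rewrite card_samples_above_gtE; apply: fin_bigcup_measurable => [|S _].
  exact: finite_finset.
exact: measurable_samples_above_eq.
Qed.

Lemma prob_card_samples_above_gt i t k :
  P [set w | (k < #|samples_above X i t w|)%N] =
    (\sum_(S : {set 'I_m} | (k < #|S|)%N)
      bernoulli_weight (fine (D `]t, +oo[%classic)) S)%:E.
Proof.
rewrite card_samples_above_gtE measure_fin_bigcup //; first last.
- by move=> S _; exact: measurable_samples_above_eq.
- by move=> S S' _ _ [w [/= <- <-]].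
- exact: finite_finset.
rewrite -sumEFin -(bigfs _ (enum_uniq {set 'I_m})) => [|S _]; last by rewrite mem_enum.
by rewrite big_enum_cond; apply: eq_bigr => S _; exact: prob_samples_above_eq.
Qed.

Let utility_gtE i j t :
  [set w | (t < utility sigma X i j w)%R] =
  [set w | (pos sigma i j < #|samples_above X i t w|)%N].
Proof. by apply/seteqP; split => w /=; rewrite utility_gt. Qed.

Lemma measurable_utility i j : measurable_fun setT (utility sigma X i j).
Proof.
apply: (measurability _ (RGenOInfty.measurableE R)) => //.
move=> _ [_ [t ->] <-]; rewrite setTI set_itvoy.
rewrite -[_ @^-1` _]/[set w | (t < utility sigma X i j w)%R] utility_gtE.
exact: measurable_card_samples_above_gt.
Qed.

Lemma measurable_sw j : measurable_fun setT (sw sigma X j).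
Proof. by apply: measurable_sum => i; exact: measurable_utility. Qed.

Lemma prob_utility_gt i j t : (2^-1)%:E <= D `]t, +oo[%classic ->
  ((binom_points m (pos sigma i j))%:R / (2 ^ m)%:R)%:E <=
    P [set w | (t < utility sigma X i j w)%R].
Proof.
move=> half_le_tail; set p := fine (D `]t, +oo[%classic).
have p_half : (2^-1 <= p <= 1)%R.
  by rewrite -!lee_fin fineK // half_le_tail probability_le1 //; exact: measurable_itv.
rewrite utility_gtE prob_card_samples_above_gt lee_fin.
rewrite ler_pdivrMr ?ltr0n ?expn_gt0 // mulrC.
exact: binom_points_le_bernoulli_tail.
Qed.

Hypothesis D_supp : D [set x : R | (0 <= x <= 1)%R] = 1.

Let samples_in_unit :=
  \bigcap_(i in setT) \bigcap_(l in setT) (X i l @^-1` `[0%R, 1%R]%classic).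

Let measurable_samples_in_unit : measurable samples_in_unit.
Proof.
apply: fin_bigcap_measurable; first exact: finite_finset; move=> i _.
apply: fin_bigcap_measurable; first exact: finite_finset; move=> l _.
by rewrite -[X in measurable X]setTI; apply: mX => //; exact: measurable_itv.
Qed.

Let prob_samples_in_unit : P samples_in_unit = 1.
Proof.
have [_ [lawX indepX]] := HX.
rewrite indepX => [|i l]; last exact: measurable_itv.
apply: big1 => i _; apply: big1 => l _.
rewrite lawX; last exact: measurable_itv.
by rewrite set_itvcc.
Qed.

Let utility_in_unit i j w : samples_in_unit w -> (0 <= utility sigma X i j w <= 1)%R.
Proof.
move=> unit_w; have [l ->] := utility_sample sigma X i j w.
by have := unit_w i I l I; rewrite /= in_itv.
Qed.

Lemma expected_sw_le j : \int[P]_w (sw sigma X j w)%:E <= n%:R%:E.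
Proof.
apply: (integral_le_full measurable_samples_in_unit prob_samples_in_unit)
  => [|w unit_w]; first exact: measurable_sw.
rewrite /sw -[X in (_ <= X%:R)%R]card_ord -sumr_const.
apply/andP; split.
  by apply: sumr_ge0 => i _; case/andP: (utility_in_unit i j unit_w).
by apply: ler_sum => i _; case/andP: (utility_in_unit i j unit_w).
Qed.

Lemma expected_sw_ge j t : (0 <= t)%R ->
  t%:E * \sum_(i < n) P [set w | (t < utility sigma X i j w)%R] <=
    \int[P]_w (sw sigma X j w)%:E.
Proof.
move=> t_ge0; set A := fun i => [set w | (t < utility sigma X i j w)%R].
have mA i : measurable (A i).
  by rewrite /A utility_gtE; exact: measurable_card_samples_above_gt.
rewrite -integral_scaled_sum_indic //.
apply: (le_integral_full measurable_samples_in_unit prob_samples_in_unit).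
- apply: measurable_funM => //; apply: measurable_sum => i.
  by apply: measurable_indic; exact: mA.
- exact: measurable_sw.
- move=> w unit_w; rewrite mulr_sumr /sw; apply/andP; split.
    by apply: sumr_ge0 => i _; rewrite mulr_ge0 // indicE ler0n.
  apply: ler_sum => i _; rewrite indicE.
  case: (boolP (w \in A i)) => [/set_mem/ltW|_]; first by rewrite mulr1.
  by rewrite mulr0; case/andP: (utility_in_unit i j unit_w).
Qed.

Lemma expected_winner_sw_ge jstar t : binomial_winner sigma jstar ->
  (0 <= t < largest_median D)%R ->
  (t * (n%:R / 2))%:E <= \int[P]_w (sw sigma X jstar w)%:E.
Proof.
move=> win /andP[t_ge0 t_lt_nu]; apply: (le_trans _ (expected_sw_ge jstar t_ge0)).
rewrite EFinM; apply: lee_wpmul2l; first by rewrite lee_fin.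
have tail := lt_largest_median_tail D_supp t_lt_nu.
apply: (le_trans _ (lee_sum _ (fun i _ => prob_utility_gt i jstar tail))).
rewrite sumEFin lee_fin -mulr_suml -natr_sum ler_pdivlMr ?ltr0n ?expn_gt0 //.
have := binomial_winner_score win; rewrite -(ler_nat R) !natrM /binom_score.
nra.
Qed.

Lemma expected_winner_sw_ge_median jstar : binomial_winner sigma jstar ->
  (largest_median D * (n%:R / 2))%:E <= \int[P]_w (sw sigma X jstar w)%:E.
Proof.
move=> win; have nu_ge0 := largest_median_ge0 D_supp.
apply/lee_mul01Pr => [|r /andP[r_gt0 r_lt1]]; first by rewrite lee_fin mulr_ge0.
rewrite -EFinM mulrA; have [nu0|nu_neq0] := eqVneq (largest_median D) 0%R.
  by rewrite nu0 mulr0 mul0r; have := expected_sw_ge jstar (lexx 0%R); rewrite mul0e.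
apply: expected_winner_sw_ge => //.
have nu_gt0 : (0 < largest_median D)%R by rewrite lt_def nu_neq0.
by apply/andP; split; nra.
Qed.

End IidSamples.

Theorem theorem7 (R : realType) (D : probability R R)
  (D_supp : D [set x : R | (0 <= x <= 1)%R] = 1%E)
  (n m : nat) (sigma : profile n m)
  (d : measure_display) (Om : measurableType d) (P : probability Om R)
  (X : 'I_n -> 'I_m -> Om -> R) (HX : iid_samples P D X)
  (jstar : 'I_m) (Hwin : binomial_winner sigma jstar) :
  (\int[P]_w (sw sigma X jstar w)%:E >=
    (largest_median D / 2)%:E *
      \big[maxe/-oo]_(j < m) \int[P]_w (sw sigma X j w)%:E)%E.
Proof.
apply: (le_trans _ (expected_winner_sw_ge_median HX D_supp Hwin)).
have nu_ge0 := largest_median_ge0 D_supp.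
have max_le : (\big[maxe/-oo]_(j < m) \int[P]_w (sw sigma X j w)%:E <= n%:R%:E)%E.
  by apply: bigmax_le => [|j _]; [exact: leNye | exact: (expected_sw_le sigma HX D_supp)].
apply: (le_trans (lee_wpmul2l _ max_le)); first by rewrite lee_fin divr_ge0.
by rewrite -EFinM mulrAC -mulrA.
Qed.
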